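(* Let $\Gamma\subset\mathbb{F}_q[x]^2$ be an $\mathbb{F}_q[x]$-lattice of rank $2$ with $\mathrm{vol}(\Gamma)=q^m$, and let $r,s\ge0$ be integers. Then the number of vectors $v=(g,h)\in\Gamma$ that are primitive in $\Gamma$ and satisfy $\deg g\le r$, $\deg h\le s$ is at most $\max(q,q^{r+s-m+2})$.
   Context: An $\mathbb{F}_q[x]$-lattice of rank $n$ is an $\mathbb{F}_q[x]$-submodule $\Gamma\subset\mathbb{F}_q[x]^n$ of finite index; $\mathrm{vol}(\Gamma)=[\mathbb{F}_q[x]^n:\Gamma]$. Degrees of polynomials use $\deg0=-\infty$. $v\in\Gamma$ is primitive in $\Gamma$ if $v$ cannot be written as $v=aw$ with $w\in\Gamma$ and $a\in\mathbb{F}_q[x]$, $\deg a\ge1$. *)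

From HB Require Import structures.
From mathcomp Require Import all_boot all_order all_algebra.
Set Implicit Arguments. Unset Strict Implicit. Unset Printing Implicit Defensive.
Import Order.TTheory GRing.Theory Num.Theory.
Local Open Scope ring_scope.

Section Lattices.
Variable F : finFieldType.

Definition vec2 := ({poly F} * {poly F})%type.

Definition vadd (v w : vec2) : vec2 := (v.1 + w.1, v.2 + w.2).
Definition vsub (v w : vec2) : vec2 := (v.1 - w.1, v.2 - w.2).
Definition vscale (a : {poly F}) (v : vec2) : vec2 := (a * v.1, a * v.2).

Definition is_submodule (G : vec2 -> Prop) : Prop :=
  [/\ G (0, 0),
      (forall v w, G v -> G w -> G (vadd v w)) &
      (forall a v, G v -> G (vscale a v))].

(* [F[x]^2 : G] = N : there are exactly N cosets of G in F[x]^2,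
   witnessed by a complete, irredundant system of N representatives. *)
Definition has_index (G : vec2 -> Prop) (N : nat) : Prop :=
  exists s : seq vec2,
    [/\ size s = N,
        (forall v, exists i, (i < N)%N /\ G (vsub v (nth (0, 0) s i))) &
        (forall i j, (i < N)%N -> (j < N)%N ->
           G (vsub (nth (0, 0) s i) (nth (0, 0) s j)) -> i = j)].

(* an F[x]-lattice of rank 2 with volume N *)
Definition lattice2_vol (G : vec2 -> Prop) (N : nat) : Prop :=
  is_submodule G /\ has_index G N.

Definition primitive (G : vec2 -> Prop) (v : vec2) : Prop :=
  G v /\ ~ (exists (a : {poly F}) (w : vec2),
             G w /\ (1 < size a)%N /\ v = vscale a w).

End Lattices.

From mathcomp Require Import all_boot all_order all_algebra.
From mathcomp Require Import zify ring.
From Stdlib Require Import Classical.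
Import Order.TTheory GRing.Theory Num.Theory.
Local Open Scope ring_scope.
Set Implicit Arguments. Unset Strict Implicit.

(* Let S be a set of such
   vectors.  Two cases, according to the 2x2 determinant ("cross product"):
   - All vectors of S are pairwise parallel.  Two parallel primitive vectors
     v, w of G are F-multiples of each other: writing a v = b w with a, b
     coprime, the Bezout combination z of v and w lies in G and v = b z,
     w = a z, so primitivity forces a, b to be constants.  Hence |S| <= q.
   - S contains two non-parallel vectors of G inside B.  A reduction argument
     with the weighted degree max(deg g + s, deg h + r) (a "reduced basis" of
     G, selected by minimality) shows that every vector of F_q[x]^2 is
     congruent modulo G to a vector of B.  So B contains q^m pairwise
     incongruent vectors b_i, and the translates v + b_i (v in S) are
     pairwise distinct vectors of B: |S| q^m <= |B| = q^(r+s+2). *)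

Definition cross (R : comPzRingType) (a b : R * R) : R := a.1 * b.2 - a.2 * b.1.

Lemma cross_nonzero_between (R : idomainType) (u v w : R * R) :
  u != (0, 0) -> cross v w != 0 -> (cross u v != 0) || (cross u w != 0).
Proof.
move=> u0 vw; apply/negPn/negP; rewrite negb_or !negbK => /andP[/eqP uv /eqP uw].
have e1 : u.1 * cross v w = v.1 * cross u w - w.1 * cross u v by rewrite /cross; ring.
have e2 : u.2 * cross v w = v.2 * cross u w - w.2 * cross u v by rewrite /cross; ring.
rewrite uv uw !mulr0 subr0 in e1 e2.
move: u0; case: u {uv uw} e1 e2 => a b /= /eqP + /eqP.
by rewrite !mulf_eq0 (negbTE vw) !orbF => /eqP-> /eqP->; rewrite eqxx.
Qed.

Lemma cross0_proportional (K : fieldType) (a b : K * K) :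
  a != (0, 0) -> cross a b = 0 -> exists c, b = (c * a.1, c * a.2).
Proof.
case: a b => a1 a2 [b1 b2]; rewrite /cross /= => a0 /eqP; rewrite subr_eq0 => /eqP e.
have [a1_0|a1_0] := eqVneq a1 0.
  have a2_0 : a2 != 0 by apply: contraNneq a0 => a2_0; rewrite a1_0 a2_0.
  move: e; rewrite a1_0 mul0r => /esym/eqP; rewrite mulf_eq0 (negbTE a2_0) /= => /eqP->.
  by exists (b2 / a2); rewrite mulr0 divfK.
exists (b1 / a1); rewrite divfK //; congr pair.
by apply: (mulIf a1_0); rewrite mulrAC divfK // [b2 * _]mulrC e mulrC.
Qed.

Lemma cramer2 (K : fieldType) (a b c : K * K) :
  cross a b != 0 -> exists al be, c = (al * a.1 + be * b.1, al * a.2 + be * b.2).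
Proof.
move=> ab; exists (cross c b / cross a b), (cross a c / cross a b).
move: ab; case: a b c => [a1 a2] [b1 b2] [c1 c2]; rewrite /cross /= => ab.
by congr pair; field.
Qed.

Lemma least_nat (P : nat -> Prop) n :
  P n -> exists m, P m /\ forall k, (k < m)%N -> ~ P k.
Proof.
elim: n {-2}n (leqnn n) => [|N IH] n hn Pn.
  by exists n; split => // k; lia.
have [[k [kn Pk]]|none] := classic (exists k, (k < n)%N /\ P k).
  by apply: (IH k) => //; lia.
by exists n; split => // k kn Pk; apply: none; exists k.
Qed.

Lemma size_shift (R : nzRingType) (c : R) j n (p : {poly R}) :
  (size p <= n)%N -> (size (c%:P * 'X^j * p)%R <= n + j)%N.
Proof.
move=> /leq_sizeP p_n; apply/leq_sizeP => i ij.
rewrite -mulrA coefCM coefXnM; case: ltnP => ji; first by rewrite mulr0.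
by rewrite p_n ?mulr0 //; lia.
Qed.

Lemma coef_shift (R : comNzRingType) (c : R) j i (p : {poly R}) :
  (c%:P * 'X^j * p)`_(i + j) = c * p`_i.
Proof. by rewrite -mulrA coefCM coefXnM ltnNge leq_addl addnK. Qed.

Lemma shift_comm (R : comNzRingType) (c : R) i j (p : {poly R}) :
  'X^i * (c%:P * 'X^j * p) = c%:P * 'X^j * ('X^i * p).
Proof. by ring. Qed.

Lemma size_XnM_leq (R : nzRingType) j n (p : {poly R}) :
  (size ('X^j * p)%R <= n + j)%N = (size p <= n)%N.
Proof.
have [->|p0] := eqVneq p 0; first by rewrite mulr0 size_poly0.
by rewrite -commr_polyXn size_mulXn // addnC leq_add2r.
Qed.

Lemma size_drop_top (R : nzRingType) (p : {poly R}) n :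
  (size p <= n)%N -> p`_n.-1 = 0 -> (size p <= n.-1)%N.
Proof.
move=> /leq_sizeP p_n top0; apply/leq_sizeP => i hi.
have [->|ne] := eqVneq i n.-1; first exact: top0.
by apply: p_n; lia.
Qed.

Lemma choose_seq (A B : Type) (a0 : A) (b0 : B) (P : A -> B -> Prop) (s : seq A) :
  (forall a, exists b, P a b) ->
  exists t, size t = size s /\ forall i, (i < size s)%N -> P (nth a0 s i) (nth b0 t i).
Proof.
move=> total; elim: s => [|a s [t [st Pst]]]; first by exists [::].
have [b Pab] := total a.
by exists (b :: t); split => [|[|i] /= i_s]; rewrite /= ?st //; apply: Pst.
Qed.

Lemma poly_eq_small (R : nzRingType) n (p q : {poly R}) :
  (size p <= n)%N -> (size q <= n)%N -> (forall i : 'I_n, p`_i = q`_i) -> p = q.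
Proof.
move=> /leq_sizeP p_n /leq_sizeP q_n eq_pq; apply/polyP => i.
by case: (ltnP i n) => [i_n | n_i]; [exact: (eq_pq (Ordinal i_n)) | rewrite p_n ?q_n].
Qed.

Section Lattice.
Variable F : finFieldType.
Implicit Types (G : vec2 F -> Prop) (u v w : vec2 F).

Section Submodule.
Variable G : vec2 F -> Prop.
Hypothesis subG : is_submodule G.

Lemma mem0 : G (0, 0). Proof. by case: subG. Qed.

Lemma memD v w : G v -> G w -> G (vadd v w). Proof. by case: subG => _ + _; apply. Qed.

Lemma memZ a v : G v -> G (vscale a v). Proof. by case: subG => _ _; apply. Qed.

Lemma memB v w : G v -> G w -> G (vsub v w).
Proof.
move=> Gv Gw; have := memD Gv (memZ (-1) Gw).
by rewrite /vadd /vscale /vsub /= !mulN1r.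
Qed.

End Submodule.

Lemma cross_sub_scale a v w : cross v (vsub w (vscale a v)) = cross v w.
Proof. by rewrite /cross /vsub /vscale /=; ring. Qed.

Section Box.
Variables r s : nat.

Definition in_box v := (size v.1 <= r.+1)%N && (size v.2 <= s.+1)%N.

(* Weighted size with weights (s, r): wbounded n (g, h) means
   deg g + s < n and deg h + r < n, so the box is wbounded (r + s + 1). *)
Definition wbounded n v :=
  (size ('X^s * v.1)%R <= n)%N && (size ('X^r * v.2)%R <= n)%N.

Definition wtop n v : F * F := (('X^s * v.1)`_n.-1, ('X^r * v.2)`_n.-1).

Lemma wbounded_box v : wbounded (r + s + 1) v = in_box v.
Proof.
rewrite /wbounded /in_box; congr andb.
  by rewrite (_ : r + s + 1 = r.+1 + s)%N ?size_XnM_leq //; lia.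
by rewrite (_ : r + s + 1 = s.+1 + r)%N ?size_XnM_leq //; lia.
Qed.

Lemma wbounded_mono n k v : wbounded n v -> (n <= k)%N -> wbounded k v.
Proof. by case/andP=> v1 v2 nk; rewrite /wbounded (leq_trans v1 nk) (leq_trans v2 nk). Qed.

Lemma wbounded_exists v : exists n, wbounded n v.
Proof.
exists (size ('X^s * v.1)%R + size ('X^r * v.2)%R)%N.
by rewrite /wbounded leq_addr leq_addl.
Qed.

Lemma wbounded0 v : wbounded 0 v -> v = (0, 0).
Proof.
rewrite /wbounded !size_poly_leq0 !mulf_eq0 !expf_eq0 polyX_eq0 !andbF /=.
by case: v => v1 v2 /andP[/eqP/= -> /eqP/= ->].
Qed.

Lemma wboundedD n v w : wbounded n v -> wbounded n w -> wbounded n (vadd v w).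
Proof.
case/andP=> v1 v2 /andP[w1 w2]; rewrite /wbounded /vadd /= !mulrDr.
by rewrite !(leq_trans (size_polyD _ _)) // geq_max ?v1 ?w1 ?v2 ?w2.
Qed.

Lemma wboundedB n v w : wbounded n v -> wbounded n w -> wbounded n (vsub v w).
Proof.
case/andP=> v1 v2 /andP[w1 w2]; rewrite /wbounded /vsub /= !mulrBr.
by rewrite !(leq_trans (size_polyD _ _)) // size_polyN geq_max ?v1 ?w1 ?v2 ?w2.
Qed.

Lemma wtopD n v w :
  wtop n (vadd v w) = ((wtop n v).1 + (wtop n w).1, (wtop n v).2 + (wtop n w).2).
Proof. by rewrite /wtop /vadd /= !mulrDr !coefD. Qed.

Lemma wtopB n v w :
  wtop n (vsub v w) = ((wtop n v).1 - (wtop n w).1, (wtop n v).2 - (wtop n w).2).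
Proof. by rewrite /wtop /vsub /= !mulrBr !coefB. Qed.

Lemma wbounded_shift c n k v :
  wbounded n v -> (n <= k)%N -> wbounded k (vscale (c%:P * 'X^(k - n)) v).
Proof.
case/andP=> v1 v2 nk; rewrite /wbounded /vscale /= !shift_comm.
by rewrite (leq_trans (size_shift _ _ v1)) ?(leq_trans (size_shift _ _ v2)) ?subnKC.
Qed.

Lemma wtop_shift c n k v : (0 < n <= k)%N ->
  wtop k (vscale (c%:P * 'X^(k - n)) v) = (c * (wtop n v).1, c * (wtop n v).2).
Proof.
move=> /andP[n0 nk]; rewrite /wtop /vscale /= !shift_comm.
by rewrite (_ : k.-1 = n.-1 + (k - n))%N ?coef_shift //; lia.
Qed.

Lemma wbounded_drop n v : wbounded n v -> wtop n v = (0, 0) -> wbounded n.-1 v.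
Proof. by case/andP=> v1 v2 [t1 t2]; rewrite /wbounded !size_drop_top. Qed.

Section Reduction.
Variable G : vec2 F -> Prop.
Hypothesis subG : is_submodule G.

(* A "reduced pair" of G: b1 nonzero of least weighted size n1, and b2 not
   parallel to b1 of least weighted size n2; minimality forces their top
   coefficients to be linearly independent. *)
Lemma reduced_pair N v w :
  G v -> G w -> wbounded N v -> wbounded N w -> cross v w != 0 ->
  exists n1 n2 b1 b2, [/\ G b1 /\ G b2, (0 < n1 <= n2)%N /\ (n2 <= N)%N,
    wbounded n1 b1 /\ wbounded n2 b2 & cross (wtop n1 b1) (wtop n2 b2) != 0].
Proof.
move=> Gv Gw Nv Nw vw.
have v0 : v != (0, 0) by apply: contraNneq vw => ->; rewrite /cross !mul0r subr0.
have [n1 [[b1 [Gb1 b1_0 B1]] least1]] :=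
  @least_nat (fun n => exists b, [/\ G b, b != (0, 0) & wbounded n b]) N
    (ex_intro _ v (And3 Gv v0 Nv)).
have witness2 : exists b, [/\ G b, cross b1 b != 0 & wbounded N b].
  by case/orP: (cross_nonzero_between b1_0 vw) => ?; [exists v | exists w].
have [n2 [[b2 [Gb2 b12 B2]] least2]] :=
  @least_nat (fun n => exists b, [/\ G b, cross b1 b != 0 & wbounded n b]) N witness2.
have n1_0 : (0 < n1)%N.
  by case: n1 B1 {least1} => // /wbounded0 b1E; rewrite b1E eqxx in b1_0.
have n2N : (n2 <= N)%N by rewrite leqNgt; apply/negP => /least2; apply.
have n12 : (n1 <= n2)%N.
  rewrite leqNgt; apply/negP => /least1; apply; exists b2; split => //.
  by apply: contraNneq b12 => ->; rewrite /cross !mulr0 subrr.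
have top1 : wtop n1 b1 != (0, 0).
  apply/eqP => top0; apply: (least1 n1.-1); first by rewrite prednK.
  by exists b1; split => //; apply: wbounded_drop.
exists n1, n2, b1, b2; split => //; first by rewrite n1_0 n12.
apply/negP => /eqP /(cross0_proportional top1) [c top2].
pose b2' := vsub b2 (vscale (c%:P * 'X^(n2 - n1)) b1).
apply: (least2 n2.-1); first by rewrite prednK // (leq_trans n1_0).
exists b2'; split; first by apply: memB => //; apply: memZ.
  by rewrite cross_sub_scale.
apply: wbounded_drop; first by apply: wboundedB => //; apply: wbounded_shift.
by rewrite wtopB wtop_shift ?n1_0 // top2 /= !subrr.
Qed.

(* With a reduced pair at hand, every vector is congruent modulo G to one of
   weighted size <= n2: the top coefficients of u are cancelled by a
   combination of shifts of b1 and b2, lowering the weighted size. *)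
Lemma reduce_mod n1 n2 b1 b2 :
  G b1 -> G b2 -> (0 < n1 <= n2)%N -> wbounded n1 b1 -> wbounded n2 b2 ->
  cross (wtop n1 b1) (wtop n2 b2) != 0 ->
  forall u, exists b, wbounded n2 b /\ G (vsub u b).
Proof.
move=> Gb1 Gb2 /andP[n1_0 n12] B1 B2 indep u.
have small k x : wbounded k x -> (k <= n2)%N -> exists b, wbounded n2 b /\ G (vsub x b).
  move=> Bx kn2; exists x; rewrite (wbounded_mono Bx) // /vsub !subrr.
  by split=> //; apply: mem0.
have [k Bu] := wbounded_exists u.
elim: k u Bu => [|k IH] u Bu; first exact: small Bu _.
have [|big] := leqP k.+1 n2; first exact: small Bu.
have n2k : (n2 <= k.+1)%N := ltnW big.
have n1k : (n1 <= k.+1)%N := leq_trans n12 n2k.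
have n2_0 : (0 < n2)%N := leq_trans n1_0 n12.
have [al [be top_u]] := cramer2 (wtop k.+1 u) indep.
pose c := vadd (vscale (al%:P * 'X^(k.+1 - n1)) b1)
              (vscale (be%:P * 'X^(k.+1 - n2)) b2).
have Gc : G c by apply: memD => //; apply: memZ.
have Bc : wbounded k.+1 c.
  by apply: wboundedD; apply: wbounded_shift.
have top0 : wtop k.+1 (vsub u c) = (0, 0).
  by rewrite wtopB top_u wtopD !wtop_shift ?n1_0 ?n2_0 ?n1k ?n2k //= !subrr.
have [b [Bb Gb]] := IH _ (wbounded_drop (wboundedB Bu Bc) top0).
exists b; split => //.
have -> : vsub u b = vadd (vsub (vsub u c) b) c.
  by rewrite /vsub /vadd /=; congr pair; ring.
by apply: memD => //; apply: memB.
Qed.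

Lemma box_covers v w : G v -> G w -> in_box v -> in_box w -> cross v w != 0 ->
  forall u, exists b, in_box b /\ G (vsub u b).
Proof.
rewrite -!wbounded_box => Gv Gw Bv Bw vw u.
have [n1 [n2 [b1 [b2 [[Gb1 Gb2] [n12 n2N] [B1 B2] indep]]]]] :=
  reduced_pair Gv Gw Bv Bw vw.
have [b [Bb Gb]] := reduce_mod Gb1 Gb2 n12 B1 B2 indep u.
by exists b; rewrite -wbounded_box (wbounded_mono Bb).
Qed.

End Reduction.

Lemma in_boxD v w : in_box v -> in_box w -> in_box (vadd v w).
Proof. by rewrite -!wbounded_box; apply: wboundedD. Qed.

Definition box_code v : {ffun 'I_r.+1 -> F} * {ffun 'I_s.+1 -> F} :=
  ([ffun i : 'I_r.+1 => v.1`_i], [ffun i : 'I_s.+1 => v.2`_i]).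

Lemma box_code_inj u v : in_box u -> in_box v -> box_code u = box_code v -> u = v.
Proof.
case: u v => [u1 u2] [v1 v2] /andP[u1r u2s] /andP[v1r v2s] [/ffunP e1 /ffunP e2].
congr pair; [apply: (poly_eq_small u1r v1r) | apply: (poly_eq_small u2s v2s)] => i.
  by move: (e1 i); rewrite !ffunE.
by move: (e2 i); rewrite !ffunE.
Qed.

Lemma box_transversal G Q : is_submodule G -> has_index G Q ->
  (forall u, exists b, in_box b /\ G (vsub u b)) ->
  exists bs, [/\ size bs = Q, uniq bs, all in_box bs
                & {in bs &, forall b b', G (vsub b b') -> b = b'}].
Proof.
move=> subG [reps [size_reps _ reps_incongr]] covers.
have [bs [size_bs rep_bs]] := choose_seq (0, 0) (0, 0) reps covers.
rewrite size_reps in size_bs rep_bs.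
have bs_incongr i j : (i < Q)%N -> (j < Q)%N ->
    G (vsub (nth (0, 0) bs i) (nth (0, 0) bs j)) -> i = j.
  move=> iQ jQ Gij; apply: reps_incongr => //.
  have [_ Gi] := rep_bs i iQ; have [_ Gj] := rep_bs j jQ.
  have -> : vsub (nth (0, 0) reps i) (nth (0, 0) reps j) =
      vadd (vsub (vsub (nth (0, 0) reps i) (nth (0, 0) bs i))
                 (vsub (nth (0, 0) reps j) (nth (0, 0) bs j)))
           (vsub (nth (0, 0) bs i) (nth (0, 0) bs j)).
    by rewrite /vsub /vadd /=; congr pair; ring.
  by apply: memD => //; apply: memB.
have Gvv v : G (vsub v v) by rewrite /vsub !subrr; apply: mem0.
exists bs; split => //.
- by apply/(uniqP (0, 0)) => i j; rewrite !inE size_bs => iQ jQ eij;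
    apply: bs_incongr => //; rewrite eij.
- by apply/(all_nthP (0, 0)) => i; rewrite size_bs => /rep_bs [].
- move=> _ _ /(nthP (0, 0))[i + <-] /(nthP (0, 0))[j + <-]; rewrite size_bs => iQ jQ Gij.
  by rewrite (bs_incongr i j).
Qed.

(* Counting: translating the lattice vectors of the box by Q incongruent box
   vectors gives size S * Q distinct vectors, all encoded injectively. *)
Lemma box_count G (S bs : seq (vec2 F)) : is_submodule G -> uniq S -> uniq bs ->
  (forall v, v \in S -> G v /\ in_box v) -> all in_box bs ->
  {in bs &, forall b b', G (vsub b b') -> b = b'} ->
  (size S * size bs <= #|F| ^ r.+1 * #|F| ^ s.+1)%N.
Proof.
move=> subG uS ubs S_box bs_box bs_incongr.
pose T := [seq box_code (vadd v b) | v <- S, b <- bs].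
have uT : uniq T.
  apply: allpairs_uniq => // -[v b] [v' b'] /allpairsP[[x y] [xS yb [-> ->]]].
  move=> /allpairsP[[x' y'] [x'S y'b [-> ->]]] /=.
  have [Gx Bx] := S_box x xS; have [Gx' Bx'] := S_box x' x'S.
  have [By By'] := (allP bs_box y yb, allP bs_box y' y'b).
  move=> /(box_code_inj (in_boxD Bx By) (in_boxD Bx' By')) [e1 e2].
  have yy' : y = y'.
    apply: bs_incongr => //.
    have -> : vsub y y' = vsub x' x by rewrite /vsub; congr pair;
      [apply: (addrI x.1) | apply: (addrI x.2)]; rewrite addrA ?e1 ?e2; ring.
    exact: memB.
  rewrite -yy' in e1 e2 *; congr pair.
  by case: x x' {Gx Bx Gx' Bx' xS x'S yb y'b} e1 e2 => [? ?] [? ?] /= /addIr-> /addIr->.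
have := max_card (mem T).
by rewrite (card_uniqP uT) size_allpairs card_prod !card_ffun !card_ord.
Qed.

End Box.

(* The zero vector is not primitive: 0 = X * 0. *)
Lemma primitive_nz G v : is_submodule G -> primitive G v -> v != (0, 0).
Proof.
move=> subG [_ not_mult]; apply/eqP => v0; apply: not_mult.
exists 'X, (0, 0); rewrite size_polyX v0 /vscale !mulr0; split=> //; exact: mem0.
Qed.

Lemma primitive_factor G v a z :
  primitive G v -> G z -> v = vscale a z -> (size a <= 1)%N.
Proof.
case=> _ not_mult Gz vE; rewrite leqNgt; apply/negP => a_big.
by apply: not_mult; exists a, z.
Qed.

Lemma cross0_coprime_relation v w : w != (0, 0) -> cross w v = 0 ->
  exists a b, [/\ a != 0, coprimep a b & vscale a v = vscale b w].
Proof.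
move=> w0 wv.
have [a [b [a0 e]]] : exists a b, a != 0 /\ vscale a v = vscale b w.
  move: w0 wv; case: v w => [v1 v2] [w1 w2]; rewrite /cross /vscale /= => w0 /eqP.
  rewrite subr_eq0 => /eqP wv; have [w1_0|w1_0] := eqVneq w1 0.
    exists w2, v2; split; first by apply: contraNneq w0 => w2_0; rewrite w1_0 w2_0.
    by move: wv; rewrite w1_0 mul0r mulr0 mulrC => <-; rewrite mulrC.
  by exists w1, v1; split => //; rewrite mulrC wv mulrC [v1 * _]mulrC.
pose g := gcdp a b.
have g0 : g != 0 by rewrite gcdp_eq0 negb_and a0.
have ea : a %/ g * g = a := divpK (dvdp_gcdl a b).
have eb : b %/ g * g = b := divpK (dvdp_gcdr a b).
exists (a %/ g), (b %/ g); split.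
- by apply: contraNneq a0 => a'0; rewrite -ea a'0 mul0r.
- by apply: coprimep_div_gcd; rewrite a0.
case: e => e1 e2; rewrite -ea -eb in e1 e2; rewrite /vscale.
by congr pair; apply: (mulIf g0); rewrite mulrAC; [rewrite e1 | rewrite e2]; rewrite mulrAC.
Qed.

Lemma bezout_factor (R : comPzRingType) (a b u1 u2 x y : R) :
  u1 * a + u2 * b = 1 -> a * x = b * y ->
  x = b * (u1 * y + u2 * x) /\ y = a * (u1 * y + u2 * x).
Proof.
move=> bez e; split.
  have -> : b * (u1 * y + u2 * x) = u1 * (b * y) + u2 * b * x by ring.
  by rewrite -e; transitivity ((u1 * a + u2 * b) * x); [rewrite bez mul1r | ring].
have -> : a * (u1 * y + u2 * x) = u1 * a * y + u2 * (a * x) by ring.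
by rewrite e; transitivity ((u1 * a + u2 * b) * y); [rewrite bez mul1r | ring].
Qed.

(* If a v = b w with a, b coprime, then v and w are multiples of a common
   vector of G, namely the Bezout combination of w and v. *)
Lemma coprime_common_factor G v w a b : is_submodule G -> G v -> G w ->
  coprimep a b -> vscale a v = vscale b w ->
  exists z, [/\ G z, v = vscale b z & w = vscale a z].
Proof.
move=> subG Gv Gw /Bezout_eq1_coprimepP[[u1 u2] /= bez] e.
move: Gv Gw e; case: v w => [v1 v2] [w1 w2] Gv Gw [e1 e2].
have [x1 y1] := bezout_factor bez e1; have [x2 y2] := bezout_factor bez e2.
exists (vadd (vscale u1 (w1, w2)) (vscale u2 (v1, v2))); split.
- by apply: (memD subG); apply: (memZ subG).
- by rewrite /vscale /vadd /= -x1 -x2.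
- by rewrite /vscale /vadd /= -y1 -y2.
Qed.

Lemma primitive_parallel G v w : is_submodule G -> primitive G v -> primitive G w ->
  cross w v = 0 -> exists c : F, v = vscale c%:P w.
Proof.
move=> subG pv pw wv.
have [a [b [a0 cop e]]] := cross0_coprime_relation (primitive_nz subG pw) wv.
have [z [Gz vE wE]] := coprime_common_factor subG pv.1 pw.1 cop e.
have /size1_polyC aE := primitive_factor pw Gz wE.
have /size1_polyC bE := primitive_factor pv Gz vE.
have a0' : a`_0 != 0 by apply: contraNneq a0 => a_0; rewrite aE a_0.
by exists (b`_0 / a`_0); rewrite vE wE aE bE /vscale !mulrA -!polyCM !coefC /= divfK.
Qed.

Lemma parallel_count G (S : seq (vec2 F)) : is_submodule G -> uniq S ->
  (forall v, v \in S -> primitive G v) ->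
  (forall v w, v \in S -> w \in S -> cross v w = 0) -> (size S <= #|F|)%N.
Proof.
move=> subG uS prim par; case: S uS prim par => [//|v0 S] uS prim par.
rewrite cardE -(size_map (fun c => vscale c%:P v0)); apply: uniq_leq_size => // x xS.
have v0S : v0 \in v0 :: S := mem_head _ _.
have [c ->] := primitive_parallel subG (prim x xS) (prim v0 v0S) (par _ _ v0S xS).
by apply: map_f; rewrite mem_enum.
Qed.

End Lattice.

Lemma nat_bound_div (R : numFieldType) (n q m k : nat) : (0 < q)%N ->
  (n * q ^ m <= q ^ k)%N -> (n%:R : R) <= (q%:R : R) ^ (k%:Z - m%:Z).
Proof.
move=> q0 bound; have q0' : (q%:R : R) != 0 by rewrite pnatr_eq0 -lt0n.
rewrite expfzDr // -exprnN -!exprnP ler_pdivlMr ?exprn_gt0 ?ltr0n //.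
by rewrite -!natrX -natrM ler_nat.
Qed.

Theorem mainTheorem9 (F : finFieldType) (G : vec2 F -> Prop) (m r s : nat) :
  lattice2_vol G (#|F| ^ m)%N ->
  forall S : seq (vec2 F),
    uniq S ->
    (forall v, v \in S ->
       [/\ primitive G v, (size v.1 <= r.+1)%N & (size v.2 <= s.+1)%N]) ->
    ((size S)%:R : rat) <=
      Num.max (#|F|%:R : rat) ((#|F|%:R : rat) ^ ((r + s + 2)%:Z - m%:Z)).
Proof.
move=> [subG index] S uS S_prim.
have S_box v : v \in S -> G v /\ in_box r s v.
  by move=> /S_prim[[Gv _] v1 v2]; rewrite /in_box v1 v2.
have q0 : (0 < #|F|)%N by apply/card_gt0P; exists 0.
have [[v [w [vS wS vw]]]|parallel] :=
  classic (exists v w, [/\ v \in S, w \in S & cross v w != 0]).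
- have [Gv Bv] := S_box v vS; have [Gw Bw] := S_box w wS.
  have [bs [size_bs ubs bs_box bs_incongr]] :=
    box_transversal subG index (box_covers subG Gv Gw Bv Bw vw).
  have := box_count subG uS ubs S_box bs_box bs_incongr.
  rewrite size_bs -expnD (_ : (r.+1 + s.+1 = r + s + 2)%N); last by lia.
  by move=> count; rewrite le_max nat_bound_div ?orbT.
- rewrite le_max ler_nat (parallel_count subG) // => [v /S_prim[] //|v w vS wS].
  have [//|vw] := eqVneq (cross v w) 0; by case: parallel; exists v, w.
Qed.
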